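(* Let $r\ge2$ and let $\tilde{\mathbf L}^{\mathrm{PD}}\in\mathbb R^{|\mathcal G_r|\times r!}$ be the matrix with rows indexed by $G\in\mathcal G_r$, columns indexed by $\sigma\in\Pi_r$, and entries \[ \tilde\ell^{\mathrm{PD}}(G,\sigma)=\sum_{i=1}^r\sum_{j=1}^{i-1}\Big(\mathbf 1\big((i,j)\in G\big)-\mathbf 1\big((j,i)\in G\big)\Big)\cdot\mathbf 1\big(\sigma(i)>\sigma(j)\big). \] Then $\operatorname{rank}(\tilde{\mathbf L}^{\mathrm{PD}})=\frac{r(r-1)}{2}$.
   Context: $\mathcal G_r$ is the set of all directed acyclic graphs on the vertex set $[r]=\{1,\dots,r\}$, viewed as sets of directed edges $(i,j)$; $\Pi_r$ is the set of all permutations (bijections) $\sigma:[r]\to[r]$, where $\sigma(i)$ is the position of element $i$; $\mathbf 1(\cdot)$ is the indicator function. *)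

From HB Require Import structures.
From mathcomp Require Import all_boot all_order all_algebra all_fingroup.
Set Implicit Arguments. Unset Strict Implicit. Unset Printing Implicit Defensive.
Import Order.TTheory GRing.Theory Num.Theory.

(* Vertex set [r] is represented by 'I_r = {0,...,r-1}. *)
Definition acyclicb (r : nat) (E : {set 'I_r * 'I_r}) : bool :=
  [forall x : 'I_r, forall y : 'I_r,
     ((x, y) \in E) ==> ~~ connect (fun a b => (a, b) \in E) y x].

Definition dag (r : nat) := {E : {set 'I_r * 'I_r} | acyclicb E}.

(* entry  l~PD(G, sigma) ; sigma i = position of element i *)
Definition lPD (R : numDomainType) (r : nat) (G : dag r) (s : {perm 'I_r}) : R :=
  \sum_(i < r) \sum_(j < r | (j < i)%N)
     ((((i, j) \in val G)%:R - ((j, i) \in val G)%:R) * ((s j < s i)%N)%:R).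

Definition LPD (R : numDomainType) (r : nat) : 'M[R]_(#|{: dag r}|, #|{: {perm 'I_r}}|) :=
  \matrix_(g < #|{: dag r}|, p < #|{: {perm 'I_r}}|) lPD R (enum_val g) (enum_val p).

(* The entry l(G, s) is the scalar product of two vectors indexed by the pairs
   j < i: the edge signs 1((i,j) in G) - 1((j,i) in G) of G, and the order
   indicators 1(s j < s i) of s. So L factors through the r(r-1)/2 pairs, which
   bounds the rank. The factorisation is full on both sides: the one-edge DAGs
   pick out the coordinates of the first factor, and every coordinate vector of
   the second factor is a signed sum of the order indicators of four
   permutations obtained by moving {a}, {b} or {a, b} to the end. *)

From HB Require Import structures.
From mathcomp Require Import all_boot all_order all_algebra all_fingroup.
From mathcomp Require Import zify ring.
Import Order.TTheory GRing.Theory Num.Theory.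
Set Implicit Arguments. Unset Strict Implicit. Unset Printing Implicit Defensive.

Lemma mxrank_mul_linv_rinv (F : fieldType) (m k n : nat)
    (A : 'M[F]_(m, k)) (B : 'M[F]_(k, n)) (S : 'M[F]_(k, m)) (T : 'M[F]_(n, k)) :
  (S *m A = 1%:M)%R -> (B *m T = 1%:M)%R -> \rank (A *m B)%R = k.
Proof.
move=> SA1 BT1; apply/eqP; rewrite eqn_leq mulmx_max_rank.
by apply: (mulmx1_min_rank (M := S) (N := T)); rewrite mulmxA SA1 mul1mx BT1.
Qed.

Section RankPerm.

Variables (r : nat) (key : 'I_r -> nat).
Hypothesis key_inj : injective key.

Definition key_rank (i : 'I_r) : nat := #|[set j | key j < key i]|.

Lemma key_rank_lt i : key_rank i < r.
Proof.
rewrite -[r]card_ord -cardsT; apply: proper_card; apply/properP.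
by split; [apply/subsetP | exists i; rewrite ?inE ?ltnn].
Qed.

Lemma key_rank_mono i j : key i < key j -> key_rank i < key_rank j.
Proof.
move=> lt_ij; apply: proper_card; apply/properP; split.
  by apply/subsetP => x; rewrite !inE => /ltn_trans; apply.
by exists i; rewrite !inE ?ltnn.
Qed.

Lemma key_rank_ltE i j : (key_rank i < key_rank j) = (key i < key j).
Proof.
case: (ltngtP (key i) (key j)) => [|lt_ji|/key_inj ->]; last by rewrite ltnn.
- exact: key_rank_mono.
- by apply/negbTE; rewrite -leqNgt ltnW // key_rank_mono.
Qed.

Lemma key_rank_inj : injective (fun i => Ordinal (key_rank_lt i)).
Proof.
move=> i j /(congr1 val) /= eq_ij; apply: key_inj.
by case: (ltngtP (key i) (key j)) => // /key_rank_mono; rewrite eq_ij ltnn.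
Qed.

Definition rank_perm : {perm 'I_r} := perm key_rank_inj.

Lemma rank_perm_ltE i j : (rank_perm i < rank_perm j) = (key i < key j).
Proof. by rewrite !permE key_rank_ltE. Qed.

End RankPerm.

Section MoveToEnd.

Variable r : nat.

(* Sorting by this key moves the elements of [f] to the end, keeping the
   relative order inside [f] and inside its complement. *)
Definition move_key (f : pred 'I_r) (i : 'I_r) : nat := f i * r + i.

Lemma move_key_inj f : injective (move_key f).
Proof.
move=> i j; rewrite /move_key => eq_key; apply: val_inj.
have := ltn_ord i; have := ltn_ord j.
by move: eq_key; case: (f i); case: (f j) => /=; lia.
Qed.

Definition move_perm (f : pred 'I_r) : {perm 'I_r} := rank_perm (@move_key_inj f).

Lemma move_perm_lt f (i j : 'I_r) :
  j < i -> (move_perm f j < move_perm f i) = ~~ (f j && ~~ f i).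
Proof.
rewrite rank_perm_ltE /move_key => lt_ji.
by have := ltn_ord i; case: (f i); case: (f j) => /=; lia.
Qed.

End MoveToEnd.

Lemma acyclic_descending r (E : {set 'I_r * 'I_r}) :
  {in E, forall e : 'I_r * 'I_r, e.2 < e.1} -> acyclicb E.
Proof.
move=> descE; apply/forallP => x; apply/forallP => y; apply/implyP => Exy.
apply/negP => /connectP [s path_s x_last]; have := descE _ Exy.
rewrite /= x_last {x_last Exy}.
elim: s y path_s => [|z s IHs] y /=; first by rewrite ltnn.
by case/andP=> Eyz /IHs lt_last /(ltn_trans (descE _ Eyz)).
Qed.

Section Factorisation.

Variables (R : numFieldType) (r : nat).
Local Open Scope ring_scope.

Definition lower_pairs : {set 'I_r * 'I_r} := [set p : 'I_r * 'I_r | (p.2 < p.1)%N].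

Definition edge_sign (G : dag r) (p : 'I_r * 'I_r) : R :=
  (p \in val G)%:R - ((p.2, p.1) \in val G)%:R.

Definition order_ind (p : 'I_r * 'I_r) (s : {perm 'I_r}) : R :=
  (s p.2 < s p.1)%N%:R.

Definition edge_sign_mx : 'M[R]_(#|{: dag r}|, #|lower_pairs|) :=
  \matrix_(g, k) edge_sign (enum_val g) (enum_val k).

Definition order_ind_mx : 'M[R]_(#|lower_pairs|, #|{: {perm 'I_r}}|) :=
  \matrix_(k, q) order_ind (enum_val k) (enum_val q).

Lemma LPD_factor : LPD R r = edge_sign_mx *m order_ind_mx.
Proof.
apply/matrixP => g q; rewrite !mxE.
under [RHS]eq_bigr => k _ do rewrite !mxE.
rewrite -(@big_enum_val _ _ _ _ (mem lower_pairs)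
  (fun p => edge_sign (enum_val g) p * order_ind p (enum_val q))).
by rewrite /lPD pair_big_dep; apply: eq_big => -[i j] //=; rewrite inE.
Qed.

Lemma edge_set_acyclic (p : 'I_r * 'I_r) :
  acyclicb [set e | (e == p) && (p.2 < p.1)%N].
Proof. by apply: acyclic_descending => e; rewrite inE => /andP[/eqP ->]. Qed.

Definition edge_dag (p : 'I_r * 'I_r) : dag r :=
  exist (fun E => acyclicb E) _ (edge_set_acyclic p).

Lemma edge_sign_edge_dag k p : k \in lower_pairs -> p \in lower_pairs ->
  edge_sign (edge_dag k) p = (p == k)%:R.
Proof.
rewrite !inE /edge_sign /= !inE => lt_k lt_p; rewrite lt_k !andbT.
suff /negbTE -> : (p.2, p.1) != k by rewrite subr0.
by apply: contraTneq lt_k => <-; rewrite -leqNgt ltnW.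
Qed.

Definition edge_select_mx : 'M[R]_(#|lower_pairs|, #|{: dag r}|) :=
  \matrix_(k, g) (g == enum_rank (edge_dag (enum_val k)))%:R.

Lemma edge_select_mxK : edge_select_mx *m edge_sign_mx = 1%:M.
Proof.
apply/matrixP => k k'; rewrite !mxE (bigD1 (enum_rank (edge_dag (enum_val k)))) //=.
rewrite big1 => [|g /negbTE neq_g]; last by rewrite !mxE neq_g mul0r.
rewrite !mxE eqxx mul1r addr0 enum_rankK edge_sign_edge_dag ?enum_valP //.
by rewrite (inj_eq enum_val_inj) eq_sym.
Qed.

Lemma order_ind_move_combo p k : p \in lower_pairs -> k \in lower_pairs ->
  order_ind p (move_perm pred0) - order_ind p (move_perm (pred1 k.1))
  - order_ind p (move_perm (pred1 k.2)) + order_ind p (move_perm (pred2 k.1 k.2))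
  = (p == k)%:R.
Proof.
case: p k => [i j] [a b]; rewrite !inE /= => lt_ji lt_ba.
rewrite /order_ind /= !move_perm_lt //= xpair_eqE.
case: (eqVneq j a) => [?|ja]; case: (eqVneq j b) => [?|jb];
case: (eqVneq i a) => [?|ia]; case: (eqVneq i b) => [?|ib]; subst => /=.
all: try (exfalso; lia).
all: ring.
Qed.

Definition perm_delta (t s : {perm 'I_r}) : R := (s == t)%:R.

Definition order_rinv_mx : 'M[R]_(#|{: {perm 'I_r}}|, #|lower_pairs|) :=
  \matrix_(q, k) let s := enum_val q in let ab := enum_val k in
    perm_delta (move_perm pred0) s - perm_delta (move_perm (pred1 ab.1)) s
    - perm_delta (move_perm (pred1 ab.2)) s + perm_delta (move_perm (pred2 ab.1 ab.2)) s.

Lemma sum_order_ind_delta p t :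
  \sum_(q < #|{: {perm 'I_r}}|) order_ind p (enum_val q) * perm_delta t (enum_val q)
  = order_ind p t.
Proof.
rewrite -(@big_enum_val _ _ _ _ (mem {: {perm 'I_r}})
  (fun s => order_ind p s * perm_delta t s)) (bigD1 t) //=.
rewrite big1 ?addr0 => [|s]; first by rewrite /perm_delta eqxx mulr1.
by rewrite /perm_delta ?inE ?andTb => /negbTE ->; rewrite mulr0.
Qed.

Lemma order_ind_mx_rinv : order_ind_mx *m order_rinv_mx = 1%:M.
Proof.
apply/matrixP => k' k; rewrite !mxE.
under eq_bigr => q _ do rewrite !mxE mulrDr !mulrBr.
rewrite big_split /= !sumrB !sum_order_ind_delta order_ind_move_combo ?enum_valP //.
by rewrite (inj_eq enum_val_inj).
Qed.

End Factorisation.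

Lemma card_lower_pairs r : #|lower_pairs r| = 'C(r, 2).
Proof.
rewrite -sum1_card.
have -> : \sum_(p in lower_pairs r) 1 = \sum_(i < r) \sum_(j < r | j < i) 1.
  by rewrite pair_big_dep; apply: eq_bigl => -[i j]; rewrite inE.
under eq_bigr => i _ do
  rewrite -(big_ord_widen_cond r xpredT (fun _ => 1) (ltnW (ltn_ord i))) sum1_card card_ord.
by rewrite -(big_mkord xpredT (fun i => i)) bin2_sum.
Qed.

Theorem mainTheorem16 (R : realFieldType) (r : nat) (hr : (2 <= r)%N) :
  \rank (LPD R r) = (r * (r - 1)) %/ 2.
Proof.
rewrite LPD_factor (mxrank_mul_linv_rinv (edge_select_mxK R r) (order_ind_mx_rinv R r)).
by rewrite card_lower_pairs bin2 divn2 subn1.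
Qed.
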